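(* Let $X$ be a space, $Y\subseteq X$ a subspace and $\tau$ a cardinal. Then $Y$ is $F_\tau$-embedded in $X$ if one of the following holds: (a) $X$ is a normal $T_1$-space, $\tau\geq\aleph_0$ and $nw(Y)\leq\tau$; (b) $Y$ is preopen in $X$ (i.e., $Y\subseteq \mathrm{int}_X(\mathrm{cl}_X(Y))$) and there is a family $\alpha$ of open subsets of $Y$ which is the union of $\tau$ strongly point-finite families and which F-separates $Y$ (in the space $Y$).
   Context: ''Space'' means topological $T_0$-space. $nw(Y)$ is the network weight of $Y$. A family of subsets of a set is strongly point-finite if every countably infinite subfamily contains a finite subfamily with empty intersection. A family $\mathcal{U}$ of subsets of a space $W$ F-separates $S\subseteq W$ if for distinct $x,y\in S$ there is $U\in\mathcal{U}$ with $x\in U$ and $y\notin\mathrm{cl}_W(U)$, or vice versa. $Y$ is $F_\tau$-embedded in $X$ if there is a family of open subsets of $X$ which is the union of $\tau$ point-finite families of open subsets of $X$ and which F-separates $Y$ (closures taken in $X$). *)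

From HB Require Import structures.
From mathcomp Require Import all_boot all_order all_algebra.
From mathcomp Require Import all_classical all_reals all_analysis.
Set Implicit Arguments. Unset Strict Implicit. Unset Printing Implicit Defensive.
Local Open Scope classical_set_scope.

(* Subspaces Y of a topological space X are represented as subsets Y : set X
   carrying the subspace topology: a set A is open in Y iff A = U `&` Y with
   U open in X, and cl_Y(A) = cl_X(A) `&` Y. Families of subsets are sets of
   sets (set (set X)); a cardinal tau is represented by an index type I,
   tau = |I|. *)

Section Defs.
Context {X : topologicalType}.

Definition open_in (Y A : set X) : Prop :=
  exists U : set X, open U /\ A = U `&` Y.

Definition closure_in (W A : set X) : set X := closure A `&` W.

Definition point_finite (fam : set (set X)) : Prop :=
  forall x : X, finite_set [set A | fam A /\ A x].

Definition strongly_point_finite (fam : set (set X)) : Prop :=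
  forall S : set (set X), S `<=` fam -> countable S -> infinite_set S ->
    exists F : set (set X),
      [/\ F `<=` S, finite_set F, F !=set0 & \bigcap_(A in F) A = set0].

Definition F_separates (W : set X) (fam : set (set X)) (S : set X) : Prop :=
  forall x y : X, S x -> S y -> x <> y ->
    exists U : set X, fam U /\
      ((U x /\ ~ closure_in W U y) \/ (U y /\ ~ closure_in W U x)).

Definition F_embedded (I : Type) (Y : set X) : Prop :=
  exists fams : I -> set (set X),
    (forall i, fams i `<=` open /\ point_finite (fams i)) /\
    F_separates setT (\bigcup_(i in setT) fams i) Y.

Definition network_of (Y : set X) (N : set (set X)) : Prop :=
  (forall A, N A -> A `<=` Y) /\
  (forall V : set X, open_in Y V -> forall y, V y -> Y y ->
     exists2 A, N A & A y /\ A `<=` V).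

Definition nw_le (Y : set X) (I : Type) : Prop :=
  exists N : set (set X), network_of Y N /\ (N #<= [set: I])%card.

Definition preopen (Y : set X) : Prop := Y `<=` interior (closure Y).

End Defs.

From mathcomp Require Import all_boot all_order all_algebra.
From mathcomp Require Import all_classical all_reals all_analysis.
Local Open Scope classical_set_scope.

(* In case (a), two distinct points of Y lie in members A, B of a network of
   Y with disjoint closures (normality and T_1, used twice), and normality
   gives an open U with cl A <= U and cl U disjoint from cl B.  Indexing the
   pairs (A, B) injectively by tau * tau = tau, every index carries at most
   one such U, so each of the tau families is trivially point-finite.
   In case (b), a relatively open A of Y is the trace on Y of the open set
   O(A) = int cl Y \ cl (Y \ A), whose closure lies in cl A, so F-separation
   in Y transfers to X.  If a point lay in infinitely many O(A), strong
   point-finiteness would give finitely many of these A with empty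
   intersection; but the intersection of the corresponding O(A) is an open
   neighbourhood of that point inside int cl Y, so it meets Y, and such a
   meeting point lies in all of those A.
   The identity tau * tau = tau for infinite tau is proved with Zorn's lemma
   on partial injections D * D -> D. *)

Set Implicit Arguments. Unset Strict Implicit.

Lemma card_le_injfun T U (A : set T) (B : set U) (u0 : U) :
  (A #<= B)%card -> exists2 f : T -> U, set_fun A B f & set_inj A f.
Proof.
move=> /card_leP [g].
pose f x := if pselect (A x) is left Ax then val (g (SigSub (mem_set Ax))) else u0.
have fE x (Ax : A x) : f x = val (g (SigSub (mem_set Ax))).
  by rewrite /f; case: pselect => // Ax'; rewrite (Prop_irrelevance Ax' Ax).
exists f => [x Ax|x y /set_mem Ax /set_mem Ay]; rewrite (fE _ Ax); first exact: set_valP.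
rewrite (fE _ Ay) => /val_inj /(@inj _ _ _ g).
by move=> /(_ (mem_set I) (mem_set I)) /(congr1 val).
Qed.

Lemma chain_sup2 T (F : set (set T)) (G1 G2 : set T) :
  total_on F subset -> F G1 -> F G2 -> exists2 G, F G & G1 `<=` G /\ G2 `<=` G.
Proof. by move=> tot F1 F2; case: (tot _ _ F1 F2) => ?; [exists G2 | exists G1]; try split. Qed.

Lemma Zorn_bigcup_ge T (P : set (set T)) (A0 : set T) : P A0 ->
    (forall F : set (set T), F `<=` P -> total_on F subset ->
      P (\bigcup_(X in F) X)) ->
  exists A, [/\ P A, A0 `<=` A & forall B, A `<` B -> ~ P B].
Proof.
move=> PA0 Pchain.
(* [set0] is admitted so that the empty chain is bounded in [Q]. *)
pose Q A := A = set0 \/ A0 `<=` A /\ P A.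
have [A [QA Amax]] : exists A, Q A /\ forall B, A `<` B -> ~ Q B.
  apply: Zorn_bigcup => F FQ tot.
  have [[G FG [x Gx]]|F0] := pselect (exists2 G, F G & G !=set0).
    right; split.
      case: (FQ _ FG) => [G0|[A0G _]]; first by rewrite G0 in Gx.
      exact: subset_trans A0G (bigcup_sup FG).
    pose F' := F `&` [set G | A0 `<=` G /\ P G].
    have -> : \bigcup_(X in F) X = \bigcup_(X in F') X.
      apply/seteqP; split=> [y [H FH Hy]|y [H [FH _] Hy]]; last by exists H.
      case: (FQ _ FH) => [H0|PH]; first by rewrite H0 in Hy.
      by exists H.
    apply: Pchain; first by move=> H [_ []].
    by move=> H K [FH _] [FK _]; exact: tot.
  left; apply/seteqP; split=> // y [G FG Gy].
  by apply: F0; exists G => //; exists y.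
have [A0A PA] : A0 `<=` A /\ P A.
  case: QA => // A0'; rewrite A0' in Amax *.
  have [A00|nA0] := pselect (A0 = set0); first by rewrite -A00; split.
  exfalso; apply: (Amax A0); last by right; split.
  by split => //; apply: contra_not nA0 => A0sub; apply/seteqP; split.
exists A; split=> // B AB PB; apply: (Amax B AB); right; split => //.
exact: subset_trans A0A (properW AB).
Qed.

Definition matching T U (A : set T) (B : set U) (G : set (T * U)) :=
  [/\ G `<=` A `*` B, forall x y y', G (x, y) -> G (x, y') -> y = y'
    & forall x x' y, G (x, y) -> G (x', y) -> x = x'].

Lemma matching_sym T U (A : set T) (B : set U) (G : set (T * U)) :
  matching A B G -> matching B A [set p | G (p.2, p.1)].
Proof. by move=> [GAB Gfun Ginj]; split=> [[y x] /GAB []|y x x'|y y' x]; eauto. Qed.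

Lemma matching_injfun T U (A : set T) (B : set U) (G : set (T * U)) (u0 : U) :
  matching A B G -> (forall x, A x -> exists y, G (x, y)) ->
  exists2 f : T -> U, set_fun A B f & set_inj A f.
Proof.
move=> [GAB Gfun Ginj] Gtot.
pose f x := if pselect (exists y, G (x, y)) is left h then sval (cid h) else u0.
have fG x : A x -> G (x, f x).
  by move=> /Gtot h; rewrite /f; case: pselect => // h'; case: cid.
exists f => [x /fG /GAB []|x x' /set_mem /fG Gx /set_mem /fG Gx' fxx'] //.
by apply: Ginj Gx _; rewrite fxx'.
Qed.

Lemma matching_bigcup T U (A : set T) (B : set U) (F : set (set (T * U))) :
  F `<=` matching A B -> total_on F subset -> matching A B (\bigcup_(G in F) G).
Proof.
move=> FM tot; split=> [p [G /FM [GAB _ _] /GAB //]|x y y'|x x' y].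
- move=> [G1 F1 G1xy] [G2 F2 G2xy']; have [G FG [s1 s2]] := chain_sup2 tot F1 F2.
  by case: (FM _ FG) => _ Gfun _; exact: Gfun (s1 _ G1xy) (s2 _ G2xy').
- move=> [G1 F1 G1xy] [G2 F2 G2x'y]; have [G FG [s1 s2]] := chain_sup2 tot F1 F2.
  by case: (FM _ FG) => _ _ Ginj; exact: Ginj (s1 _ G1xy) (s2 _ G2x'y).
Qed.

Lemma set_inj_comparable T U (A : set T) (B : set U) (t0 : T) (u0 : U) :
  (exists2 f : T -> U, set_fun A B f & set_inj A f) \/
  (exists2 g : U -> T, set_fun B A g & set_inj B g).
Proof.
have [G [MG Gmax]] := Zorn_bigcup (@matching_bigcup _ _ A B).
have [GA|/existsNP [a /not_implyP [Aa Ga]]] :=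
    pselect (forall x, A x -> exists y, G (x, y)).
  by left; exact: matching_injfun u0 MG GA.
have [GB|/existsNP [b /not_implyP [Bb Gb]]] :=
    pselect (forall y, B y -> exists x, G (x, y)).
  by right; apply: (matching_injfun t0 (matching_sym MG)) => y /GB [x]; exists x.
exfalso; case: MG => GAB Gfun Ginj.
apply: (Gmax (G `|` [set (a, b)])).
  split=> [p Gp|/(_ (a, b) (or_intror erefl))]; [by left|by move=> Gab; apply: Ga; exists b].
split=> [p [/GAB //|/= ->]|x y y'|x x' y] //.
- move=> [Gxy|[? ?]] [Gxy'|[? ?]]; subst; [exact: Gfun Gxy Gxy'| | |by []].
  + by exfalso; apply: Ga; exists y.
  + by exfalso; apply: Ga; exists y'.
- move=> [Gxy|[? ?]] [Gx'y|[? ?]]; subst; [exact: Ginj Gxy Gx'y| | |by []].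
  + by exfalso; apply: Gb; exists x.
  + by exfalso; apply: Gb; exists x'.
Qed.

Section SelfPairing.
Variable T : Type.
Implicit Types G : set (T * T * T).

Definition pairing_dom G : set T := [set a | exists b z, G ((a, b), z)].

(* [G] is the graph of an injection of [D * D] into [D], where [D] is its domain. *)
Definition self_pairing G :=
  [/\ forall p z z', G (p, z) -> G (p, z') -> z = z',
      forall p p' z, G (p, z) -> G (p', z) -> p = p',
      forall a b, (exists z, G ((a, b), z)) <-> pairing_dom G a /\ pairing_dom G b &
      forall p z, G (p, z) -> pairing_dom G z].

Lemma pairing_domS G G' : G `<=` G' -> pairing_dom G `<=` pairing_dom G'.
Proof. by move=> GG' a [b [z Gabz]]; exists b, z; exact: GG'. Qed.

Lemma self_pairing_bigcup (F : set (set (T * T * T))) :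
  F `<=` self_pairing -> total_on F subset -> self_pairing (\bigcup_(G in F) G).
Proof.
move=> FP tot; have domF G : F G -> pairing_dom G `<=` pairing_dom (\bigcup_(G in F) G).
  by move=> FG; apply: pairing_domS; exact: bigcup_sup.
split.
- move=> p z z' [G1 F1 G1z] [G2 F2 G2z']; have [G FG [s1 s2]] := chain_sup2 tot F1 F2.
  by case: (FP _ FG) => Gfun _ _ _; exact: Gfun (s1 _ G1z) (s2 _ G2z').
- move=> p p' z [G1 F1 G1p] [G2 F2 G2p']; have [G FG [s1 s2]] := chain_sup2 tot F1 F2.
  by case: (FP _ FG) => _ Ginj _ _; exact: Ginj (s1 _ G1p) (s2 _ G2p').
- move=> a b; split=> [[z [G FG Gabz]]|].
    case: (FP _ FG) => _ _ Gdom _.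
    by have [Da Db] := (Gdom a b).1 (ex_intro _ z Gabz); split; exact: domF FG _ _.
  move=> [[b1 [z1 [G1 F1 G1a]]] [b2 [z2 [G2 F2 G2b]]]].
  have [G FG [s1 s2]] := chain_sup2 tot F1 F2; case: (FP _ FG) => _ _ Gdom _.
  have [|z Gabz] := (Gdom a b).2; last by exists z, G.
  by split; [exists b1, z1; exact: s1|exists b2, z2; exact: s2].
- move=> p z [G FG Gpz]; case: (FP _ FG) => _ _ _ Gim.
  exact: domF FG _ (Gim _ _ Gpz).
Qed.

Lemma self_pairing_nat_code (e : nat -> T) (c : nat * nat -> nat) :
  injective e -> injective c ->
  let G := [set q | exists m n, q = ((e m, e n), e (c (m, n)))] in
  self_pairing G /\ range e `<=` pairing_dom G.
Proof.
move=> einj cinj G; have eG m : pairing_dom G (e m).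
  by exists (e m), (e (c (m, m))), m, m.
split; last by move=> _ [m _ <-].
split.
- by move=> p z z' [m [n [-> ->]]] [m' [n' [/einj <- /einj <- ->]]].
- by move=> p p' z [m [n [-> ->]]] [m' [n' [-> /einj /cinj [<- <-]]]].
- move=> a b; split=> [[z [m [n [-> -> _]]]]|[[b1 [z1 [m [n [-> _ _]]]]]]] //.
  by move=> [b2 [z2 [m' [n' [-> _ _]]]]]; exists (e (c (m, m'))), m, m'.
- by move=> p z [m [n [_ ->]]].
Qed.

Lemma self_pairing_op G : self_pairing G ->
  exists phi : T -> T -> T,
    (forall a b, pairing_dom G a -> pairing_dom G b -> pairing_dom G (phi a b)) /\
    (forall a b a' b', pairing_dom G a -> pairing_dom G b ->
       pairing_dom G a' -> pairing_dom G b' -> phi a b = phi a' b' -> a = a' /\ b = b').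
Proof.
move=> [_ Ginj Gdom Gim].
pose phi a b := if pselect (exists z, G ((a, b), z)) is left h then sval (cid h) else a.
have phiG a b : pairing_dom G a -> pairing_dom G b -> G ((a, b), phi a b).
  move=> Da Db; rewrite /phi; case: pselect => [h|[]]; last exact/(Gdom a b).2.
  by case: cid.
exists phi; split=> [a b Da Db|a b a' b' Da Db Da' Db' phiE]; first exact: Gim (phiG _ _ Da Db).
have := phiG _ _ Da Db; rewrite phiE => /Ginj /(_ (phiG _ _ Da' Db')).
by case.
Qed.

Lemma self_pairing_extend G (E : set T) (h : T * T -> T) :
  let D := pairing_dom G in
  self_pairing G -> D `<=` E ->
  set_fun ((E `*` E) `\` (D `*` D)) (E `\` D) h ->
  set_inj ((E `*` E) `\` (D `*` D)) h ->
  exists2 G', G `<=` G' & self_pairing G' /\ pairing_dom G' = E.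
Proof.
move=> D [Gfun Ginj Gdom Gim] DE hE h_inj.
pose N := [set q | ((E `*` E) `\` (D `*` D)) q.1 /\ q.2 = h q.1].
have GD a b z : G ((a, b), z) -> D a /\ D b by move=> Gabz; apply/(Gdom a b).1; exists z.
have GzD p z : G (p, z) -> D z := Gim p z.
have domE : pairing_dom (G `|` N) = E.
  apply/seteqP; split=> [a [b [z [/GD [/DE] //|[[/= [Ea _] _] _]//]]]|a Ea].
  have [Da|nDa] := pselect (D a); first exact: pairing_domS Da.
  by exists a, (h (a, a)); right; split=> //; split=> // -[].
exists (G `|` N) => [q Gq|]; first by left.
split=> //; split.
- move=> p z z' [Gz|[Np /= ->]] [Gz'|[[_ nDp] /= ->]] //; first exact: Gfun Gz Gz'.
  + by case: p Gz nDp => a b /GD ? [].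
  + by case: p Gz' Np => a b /GD ? [_ []].
- move=> p p' z [Gz|[Np /= ->]] [Gz'|[Np' /= zE]].
  + exact: Ginj Gz Gz'.
  + by case: (hE _ Np') => _ []; rewrite -zE; exact: GzD Gz.
  + by case: (hE _ Np) => _ []; exact: GzD Gz'.
  + by apply: h_inj zE; exact: mem_set.
- move=> a b; rewrite domE; split=> [[z [/GD [/DE ? /DE ?]|[[[Ea Eb] _] _]]]|[Ea Eb]] //.
  have [[Da Db]|nDab] := pselect (D a /\ D b).
    by have [z Gz] := (Gdom a b).2 (conj Da Db); exists z; left.
  by exists (h (a, b)); right.
- move=> p z; rewrite domE => -[/GzD /DE //|[Np /= ->]]; by case: (hE _ Np).
Qed.

End SelfPairing.

Section PairCode.
Variables (T : Type) (D : set T) (phi : T -> T -> T) (d0 d1 : T).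
Hypothesis phiD : forall a b, D a -> D b -> D (phi a b).
Hypothesis phi_inj : forall a b a' b', D a -> D b -> D a' -> D b' ->
  phi a b = phi a' b' -> a = a' /\ b = b'.
Hypotheses (Dd0 : D d0) (Dd1 : D d1) (d01 : d0 <> d1).

Lemma pair_code (E : set T) (g : T -> T) :
  set_fun (E `\` D) D g -> set_inj (E `\` D) g ->
  exists2 k : T * T -> T, set_fun (E `*` E) D k & set_inj (E `*` E) k.
Proof.
move=> gD g_inj.
(* [E] injects into [{d0, d1} * D], hence into [D]. *)
pose psi x := if pselect (D x) then phi d1 x else phi d0 (g x).
have psiD x : E x -> D (psi x).
  by move=> Ex; rewrite /psi; case: pselect => Dx; apply: phiD => //; exact: gD.
have psi_inj x y : E x -> E y -> psi x = psi y -> x = y.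
  move=> Ex Ey; rewrite /psi; case: pselect => Dx; case: pselect => Dy.
  - by move=> /(phi_inj Dd1 Dx Dd1 Dy) [].
  - by move=> /(phi_inj Dd1 Dx Dd0 (gD _ (conj Ey Dy))) [/esym /d01].
  - by move=> /(phi_inj Dd0 (gD _ (conj Ex Dx)) Dd1 Dy) [/d01].
  - move=> /(phi_inj Dd0 (gD _ (conj Ex Dx)) Dd0 (gD _ (conj Ey Dy))) [_].
    by apply: g_inj; exact: mem_set.
exists (fun p => phi (psi p.1) (psi p.2)) => [[a b] [/= Ea Eb]|[a b] [a' b']].
  exact: phiD (psiD _ _) (psiD _ _).
move=> /set_mem [/= Ea Eb] /set_mem [/= Ea' Eb'] kE.
have [/psi_inj -> // /psi_inj -> //] :=
  phi_inj (psiD _ Ea) (psiD _ Eb) (psiD _ Ea') (psiD _ Eb') kE.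
Qed.

Lemma square_inj_of_complement (u : T -> T) :
  set_fun (~` D) D u -> set_inj (~` D) u -> exists k : T * T -> T, injective k.
Proof.
rewrite -setTD => uD u_inj; have [k _ k_inj] := pair_code uD u_inj.
by exists k => p q kpq; apply: k_inj kpq; exact: mem_set.
Qed.

(* Extend [G] to [E := D `|` j @` D], coding the new pairs of [E * E]
   injectively into [j @` D = E `\` D]. *)
Lemma self_pairing_grow (G : set (T * T * T)) (j : T -> T) :
  pairing_dom G = D -> self_pairing G -> set_fun D (~` D) j -> set_inj D j ->
  exists2 G', G `<` G' & self_pairing G'.
Proof.
move=> domG PG jD j_inj; pose E := D `|` j @` D.
have [g gP] : exists g : T -> T, forall x, (j @` D) x -> D (g x) /\ j (g x) = x.
  exists (fun x => if pselect ((j @` D) x) is left h then s2val (cid2 h) else x).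
  by move=> x jx; case: pselect => // h; case: cid2.
have [|x y|k kD k_inj] := @pair_code E g.
- by move=> x [[//|/gP []]].
- move=> /set_mem [[//|jx _]] /set_mem [[//|jy _]] gxy.
  by rewrite -(gP _ jx).2 -(gP _ jy).2 gxy.
have jkE : set_fun ((E `*` E) `\` (D `*` D)) (E `\` D) (j \o k).
  move=> p [Ep _]; split; last exact: jD (kD _ Ep).
  by right; exists (k p) => //; exact: kD.
have jk_inj : set_inj ((E `*` E) `\` (D `*` D)) (j \o k).
  move=> p q /set_mem [Ep _] /set_mem [Eq _] /= /j_inj jk.
  by apply: k_inj; rewrite ?inE //; apply: jk; rewrite inE; exact: kD.
have DE : pairing_dom G `<=` E by rewrite domG => x Dx; left.
rewrite -domG in jkE jk_inj.
have [G' GG' [PG' domG']] := self_pairing_extend PG DE jkE jk_inj.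
exists G' => //; split=> // /pairing_domS.
rewrite domG' domG => /(_ (j d0)) jE.
by apply: (jD d0 Dd0); apply: jE; right; exists d0.
Qed.

End PairCode.

Theorem infinite_square_inj T : infinite_set [set: T] ->
  exists k : T * T -> T, injective k.
Proof.
move=> infT; have [t0 _] := infinite_setN0 infT.
have [e _ /in2TT e_inj] := card_le_injfun t0 ((infiniteP _).1 infT).
have [c _ /in2TT c_inj] := card_le_injfun 0 (countableP [set: nat * nat]).
have [P0 eP0] := self_pairing_nat_code e_inj c_inj.
have [G [PG /pairing_domS P0G Gmax]] := Zorn_bigcup_ge P0 (@self_pairing_bigcup T).
have eD n : pairing_dom G (e n) by apply: P0G; apply: eP0; exists n.
have e01 : e 0 <> e 1 by move=> /e_inj.
have [phi [phiD phi_inj]] := self_pairing_op PG.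
have [[u uD u_inj]|[j jD j_inj]] := set_inj_comparable (~` pairing_dom G) (pairing_dom G) t0 t0.
  exact: (square_inj_of_complement phiD phi_inj (eD 0) (eD 1) e01 uD u_inj).
have [G' GG' PG'] := self_pairing_grow phiD phi_inj (eD 0) (eD 1) e01 erefl PG jD j_inj.
by case: (Gmax _ GG' PG').
Qed.

Lemma finite_subset1 T (A : set T) : is_subset1 A -> finite_set A.
Proof.
move=> A1; have [[a Aa]|nA] := pselect (A !=set0).
  by apply: sub_finite_set (finite_set1 a) => b Ab; exact: A1.
by apply: sub_finite_set (finite_set0 T) => b Ab; apply: nA; exists b.
Qed.

Section OpenExtension.
Context {X : topologicalType}.
Variable Y : set X.

Definition open_extension (A : set X) : set X :=
  interior (closure Y) `&` ~` closure (Y `\` A).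

Lemma open_extension_open A : open (open_extension A).
Proof. by apply: openI; [exact: open_interior|rewrite openC; exact: closed_closure]. Qed.

Lemma open_extension_trace A : open_extension A `&` Y `<=` A.
Proof. by move=> w [[_ ncl] Yw]; apply: contra_notP ncl => nAw; exact: subset_closure. Qed.

Lemma open_extension_sup A : preopen Y -> open_in Y A -> A `<=` open_extension A.
Proof.
move=> pY [U [oU ->]] a [Ua Ya]; split; first exact: pY.
move=> /(_ U (open_nbhs_nbhs (conj oU Ua))) [w [[Yw nUYw] Uw]].
exact: nUYw.
Qed.

Lemma open_extension_closure A : closure (open_extension A) `<=` closure A.
Proof.
suff OA : open_extension A `<=` closure A.
  by rewrite [X in _ `<=` X](closure_id _).1; [exact: closureS|exact: closed_closure].
move=> z Oz B /(filterI (open_nbhs_nbhs (conj (open_extension_open A) Oz))) nOB.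
have [w [Yw [Ow Bw]]] := interior_subset (proj1 Oz) _ nOB.
by exists w; split => //; exact: open_extension_trace.
Qed.

Lemma point_finite_open_extension (alpha : set (set X)) : preopen Y ->
  (forall A, alpha A -> open_in Y A) -> strongly_point_finite alpha ->
  point_finite (open_extension @` alpha).
Proof.
move=> pY alphaY spf z; apply: contrapT => infz.
pose S := [set A | alpha A /\ open_extension A z].
have /infiniteP infS : infinite_set S.
  apply: contra_not infz => /(finite_image open_extension).
  by apply: sub_finite_set => _ [[A alphaA <-] Az]; exists A.
have [g /(_ _ I) gS /in2TT g_inj] := card_le_injfun set0 infS.
have [|||F [Fg finF [A0 FA0] capF]] := spf (range g).
- by move=> _ [n _ <-]; exact: (gS n).1.
- exact: card_image_le.
- by rewrite (eq_finite_set (inj_card_eq (in2W g_inj))); exact: infinite_nat.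
have zF A : F A -> open_extension A z by move=> /Fg [n _ <-]; exact: (gS n).2.
have nW : nbhs z (\bigcap_(A in F) open_extension A).
  have [s Fs] := finite_fsetP.1 finF; rewrite Fs; apply: filter_bigI => A sA.
  by apply: open_nbhs_nbhs; split; [exact: open_extension_open|apply: zF; rewrite Fs].
have [w [Yw Ww]] := interior_subset (proj1 (zF _ FA0)) _ nW.
have : (\bigcap_(A in F) A) w by move=> A FA; exact: open_extension_trace (conj (Ww _ FA) Yw).
by rewrite capF.
Qed.

End OpenExtension.

Lemma F_embedded_preopen {X : topologicalType} (Y : set X) (I : Type)
    (alphas : I -> set (set X)) : preopen Y ->
  (forall i, (forall A, alphas i A -> A `<=` Y /\ open_in Y A) /\
             strongly_point_finite (alphas i)) ->
  F_separates Y (\bigcup_(i in setT) alphas i) Y -> F_embedded I Y.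
Proof.
move=> pY alphasY sep; exists (fun i => open_extension Y @` alphas i); split.
  move=> i; split; first by move=> _ [A _ <-]; exact: open_extension_open.
  by apply: point_finite_open_extension pY _ (alphasY i).2 => A /((alphasY i).1 A) [].
move=> x y Yx Yy xy; have [U [[i _ alphaU] Uxy]] := sep x y Yx Yy xy.
have [_ UY] := (alphasY i).1 U alphaU.
exists (open_extension Y U); split; first by exists i => //; exists U.
have clU z : ~ closure_in Y U z -> Y z -> ~ closure_in setT (open_extension Y U) z.
  by move=> nUz Yz [/open_extension_closure Uz _]; exact: nUz.
case: Uxy => [[Ux nUy]|[Uy nUx]]; [left|right]; split;
  by [apply: open_extension_sup|exact: clU].
Qed.

Section NormalSpace.
Context {X : topologicalType}.
Hypothesis normalX : normal_space X.

Lemma normal_shrink (C W : set X) : closed C -> open W -> C `<=` W ->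
  exists2 U, open U & C `<=` U /\ closure U `<=` W.
Proof.
move=> cC oW CW.
have [V CV clVW] := normalX cC (fun x Cx => open_nbhs_nbhs (conj oW (CW x Cx))).
exists (interior V); first exact: open_interior.
by split=> [x /CV //|]; apply: subset_trans clVW; apply: closureS; exact: interior_subset.
Qed.

Definition separating_open (A B : set X) : set X :=
  get [set U | [/\ open U, closure A `<=` U & closure U `<=` ~` closure B]].

Lemma separating_openP (A B : set X) : closure A `&` closure B = set0 ->
  [/\ open (separating_open A B), closure A `<=` separating_open A B
    & closure (separating_open A B) `<=` ~` closure B].
Proof.
move=> /disjoints_subset AB.
apply: (@getPex _ [set U | [/\ open U, closure A `<=` U & closure U `<=` ~` closure B]]).
have [|U oU [AU UB]] := normal_shrink (@closed_closure _ A) _ AB; last by exists U.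
by rewrite openC; exact: closed_closure.
Qed.

Hypothesis accessibleX : accessible_space X.

Lemma network_separates (Y : set X) (N : set (set X)) : network_of Y N ->
  forall x y, Y x -> Y y -> x <> y ->
  exists A B, [/\ N A, N B, A x, B y & closure A `&` closure B = set0].
Proof.
move=> [_ Nnet] x y Yx Yy xy.
have network_in (W : set X) z : open W -> W z -> Y z ->
    exists2 A, N A & A z /\ closure A `<=` closure W.
  move=> oW Wz Yz; have [|A NA [Az AW]] := Nnet (W `&` Y) _ z (conj Wz Yz) Yz.
    by exists W.
  by exists A => //; split => //; apply: closureS => w /AW [].
have closed1 : forall z, closed [set z] := accessible_closed_set1 accessibleX.
have [Ux oUx [/(_ x erefl) Uxx clUx]] :
    exists2 U, open U & [set x] `<=` U /\ closure U `<=` ~` [set y].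
  apply: (normal_shrink (closed1 x)); first by rewrite openC.
  by move=> _ -> /= yx; apply: xy.
have [A NA [Ax clA]] := network_in _ _ oUx Uxx Yx.
have [Uy oUy [/(_ y erefl) Uyy clUy]] :
    exists2 U, open U & [set y] `<=` U /\ closure U `<=` ~` closure A.
  apply: (normal_shrink (closed1 y)); first by rewrite openC; exact: closed_closure.
  by move=> _ -> /clA /clUx; apply.
have [B NB [By clB]] := network_in _ _ oUy Uyy Yy.
exists A, B; split => //; apply/disjoints_subset => z Az /clB /clUy; exact.
Qed.

Lemma F_embedded_network (Y : set X) (I : Type) :
  infinite_set [set: I] -> nw_le Y I -> F_embedded I Y.
Proof.
move=> infI [N [netN NI]]; have [i0 _] := infinite_setN0 infI.
have [k k_inj] := infinite_square_inj infI.
have [f _ f_inj] := card_le_injfun i0 NI.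
pose pairs i := [set p : set X * set X |
  [/\ N p.1, N p.2, closure p.1 `&` closure p.2 = set0 & k (f p.1, f p.2) = i]].
exists (fun i => [set separating_open p.1 p.2 | p in pairs i]); split.
  move=> i; split; first by move=> _ [p [_ _ AB _] <-]; case: (separating_openP AB).
  move=> z; apply: sub_finite_set (finite_image (fun p => separating_open p.1 p.2)
    (finite_subset1 (A := pairs i) _)); first by move=> U [].
  move=> [A B] [A' B'] [/= NA NB _ <-] [/= NA' NB' _] /k_inj [].
  by move=> /(f_inj _ _ (mem_set NA') (mem_set NA)) -> /(f_inj _ _ (mem_set NB') (mem_set NB)) ->.
move=> x y Yx Yy xy; have [A [B [NA NB Ax By AB]]] := network_separates netN Yx Yy xy.
have [_ AU UB] := separating_openP AB.
exists (separating_open A B); split; first by exists (k (f A, f B)) => //; exists (A, B).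
left; split; first exact/AU/subset_closure.
by move=> [/UB + _]; apply; exact: subset_closure.
Qed.

End NormalSpace.

Theorem theorem4p8 (X : topologicalType) (Y : set X) (I : Type) :
  kolmogorov_space X ->
  ( (normal_space X /\ accessible_space X /\ infinite_set [set: I] /\ nw_le Y I)
    \/
    (preopen Y /\
     exists alphas : I -> set (set X),
       (forall i, (forall A, alphas i A -> A `<=` Y /\ open_in Y A) /\
                  strongly_point_finite (alphas i)) /\
       F_separates Y (\bigcup_(i in setT) alphas i) Y) ) ->
  F_embedded I Y.
Proof.
(* T_0 is not needed: case (a) assumes T_1 and case (b) uses no separation axiom. *)
move=> _ [[normalX [accessibleX [infI nwY]]]|[preY [alphas [alphasY sep]]]].
- exact: F_embedded_network.
- exact: F_embedded_preopen sep.
Qed.
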